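(* Let $b\ge2$ be an integer and let $w=d_1\dots d_p$ be a fixed block of $b$-ary digits with $p\ge1$. Let $u=d_1\dots d_{p-1}$ and $v=d_2\dots d_p$. Let $k\ge1$. Then for every string $s$ of length $p-1$, the following identity of formal Laurent series in $t$ holds: $$Z_w(s,k)=t^{2-p}\,Z_w(s,0,u)\,Z_w(v,k-1).$$
   Context: Strings are finite sequences over $\{0,\dots,b-1\}$, including the empty string $\epsilon$. $k_w(X)$ is the number of possibly overlapping occurrences of $w$ in the string $X$, and $X$ is $j$-admissible if $k_w(X)=j$. For strings $x,y$ and $j\ge0$, $Z_w(x,j,y)=\sum_{l\ge0}c_l t^l$, where $c_l$ is the number of $j$-admissible strings of length $l$ that have $x$ as a prefix and $y$ as a suffix. Also $Z_w(x,j)=Z_w(x,j,\epsilon)$. When $p=1$, $u=v=s=\epsilon$. *)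

From mathcomp Require Import all_boot.
Set Implicit Arguments. Unset Strict Implicit. Unset Printing Implicit Defensive.

(* k_w(X): number of (possibly overlapping) occurrences of w in X,
   i.e. number of positions i with X[i..i+|w|-1] = w. *)
Definition occ (b : nat) (w X : seq 'I_b) : nat :=
  count (fun i => take (size w) (drop i X) == w) (iota 0 (size X).+1).

(* c_l of Z_w(x,j,y): number of j-admissible strings of length l having
   x as a prefix and y as a suffix. *)
Definition Zcoef (b : nat) (w x : seq 'I_b) (j : nat) (y : seq 'I_b) (l : nat) : nat :=
  #|[set X : l.-tuple 'I_b | [&& prefix x X, suffix y X & occ w X == j]]|.

Definition conv (f g : nat -> nat) (m : nat) : nat :=
  \sum_(i < m.+1) f i * g (m - i).

(* Coefficient of t^n (n >= 0) in the Laurent series t^(2-p) * F, where F is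
   a power series given by its coefficient function. The statement separately
   requires that the negative-degree coefficients of t^(2-p) * F vanish, so the
   two conjuncts together express equality of formal Laurent series. *)
Definition shift_coef (p : nat) (F : nat -> nat) (n : nat) : nat :=
  if 2 <= n + p then F (n + p - 2) else 0.

From mathcomp Require Import all_boot zify.

(* Classify the strings X of the left-hand side by the position i of the first
   occurrence of w = d1 v and write X = Y d1 Z with |Y| = i.  An occurrence
   starting before i only sees the first i + p - 1 letters of X, which are Y u
   when Z starts with v.  Hence X is counted iff Y u has prefix s, suffix u and
   no occurrence of w, and Z has prefix v and k - 1 occurrences.  The lengths
   satisfy |X| = |Y u| + |Z| + 2 - p, whence the factor t^(2-p). *)

Set Implicit Arguments. Unset Strict Implicit. Unset Printing Implicit Defensive.

Section TupleCounting.

Variable T : finType.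

Lemma card_tuple_cat_suffix (u : seq T) a (P : pred (seq T)) :
  #|[set Y : a.-tuple T | P (Y ++ u)]| =
  #|[set X : (a + size u).-tuple T | suffix u X && P X]|.
Proof.
rewrite -(card_in_imset (f := fun Y : a.-tuple T => cat_tuple Y (in_tuple u))); last first.
  move=> Y1 Y2 _ _ /(congr1 val)/eqP.
  by rewrite /= eqseq_cat ?size_tuple // eqxx andbT => /eqP/val_inj.
apply: eq_card => X; rewrite inE; apply/imsetP/andP => [[Y] | [/suffixP[Y eX] PX]].
  by rewrite inE => PY ->; rewrite suffix_suffix.
have sY : size Y == a by rewrite -(eqn_add2r (size u)) -size_cat -eX size_tuple.
by exists (Tuple sY); [rewrite inE /= -eX | apply: val_inj; rewrite /= -eX].
Qed.

Lemma card_tuple_cat_cons (x0 : T) a c (P Q R : pred (seq T)) :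
  (forall Y Z, size Y = a -> size Z = c -> P (Y ++ x0 :: Z) = Q Y && R Z) ->
  (forall X, size X = a + c.+1 -> P X -> nth x0 X a = x0) ->
  #|[set X : (a + c.+1).-tuple T | P X]| =
  #|[set Y : a.-tuple T | Q Y]| * #|[set Z : c.-tuple T | R Z]|.
Proof.
move=> PE P_x0; rewrite -cardsX.
rewrite -(card_in_imset (f := fun YZ : a.-tuple T * c.-tuple T =>
                                cat_tuple YZ.1 [tuple of x0 :: YZ.2])); last first.
  move=> [Y1 Z1] [Y2 Z2] _ _ /(congr1 val)/eqP.
  rewrite /= eqseq_cat ?size_tuple // eqseq_cons eqxx /=.
  by case/andP=> /eqP/val_inj-> /eqP/val_inj->.
apply: eq_card => X; rewrite inE; apply/idP/imsetP => [PX | [[Y Z]]]; last first.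
  by rewrite !inE /= => /andP[QY RZ] ->; rewrite PE ?size_tuple ?QY.
have sX := size_tuple X.
have eX : X = take a X ++ x0 :: drop a.+1 X :> seq T.
  by rewrite -(P_x0 X sX PX) -drop_nth ?cat_take_drop // sX addnS ltnS leq_addr.
have sY : size (take a X) == a by rewrite size_takel // sX leq_addr.
have sZ : size (drop a.+1 X) == c by rewrite size_drop sX addnS subSS addKn.
exists (Tuple sY, Tuple sZ); last by apply: val_inj; rewrite /= -eX.
by rewrite !inE /= -PE ?(eqP sY) ?(eqP sZ) // -eX.
Qed.

End TupleCounting.

Lemma card_set_partition (T : finType) (P : pred T) (f : T -> nat) N :
  (forall X, P X -> f X < N) ->
  #|[set X | P X]| = \sum_(i < N) #|[set X | P X && (f X == i)]|.
Proof.
move=> f_lt; rewrite -sum1dep_card.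
under [RHS]eq_bigr do rewrite -sum1dep_card.
rewrite (exchange_big_dep P) /= => [|X i PX /andP[] //].
apply: eq_bigr => X PX; rewrite (bigD1 (Ordinal (f_lt X PX))) ?PX ?eqxx //= big1 // => i.
by case/andP=> /eqP fXi; rewrite -(inj_eq val_inj) /= fXi eqxx.
Qed.

Lemma take_cat_take (T : Type) (Y Z : seq T) n m : n <= size Y + m ->
  take n (Y ++ Z) = take n (Y ++ take m Z).
Proof. by move=> le_n; rewrite !take_cat; case: ifP => // _; rewrite take_takel //; lia. Qed.

Definition occurs_at (T : eqType) (w X : seq T) (i : nat) : bool :=
  take (size w) (drop i X) == w.

Definition first_occ (T : eqType) (w X : seq T) : nat :=
  find (occurs_at w X) (iota 0 (size X).+1).

Section Occurrences.

Variables (b : nat) (w : seq 'I_b).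
Hypothesis w_gt0 : 0 < size w.

Lemma occ_cat Y Z :
  occ w (Y ++ Z) = count (occurs_at w (Y ++ Z)) (iota 0 (size Y)) + occ w Z.
Proof.
rewrite /occ size_cat -addnS iotaD count_cat [0 + _]addnC.
rewrite iotaDl count_map; congr (_ + _); apply: eq_count => i /=.
by rewrite addnC -drop_drop drop_size_cat.
Qed.

Lemma occ_cons x Z : occ w (x :: Z) = (take (size w) (x :: Z) == w) + occ w Z.
Proof. by rewrite -cat1s occ_cat /= addn0. Qed.

Lemma occ_small X : size X < size w -> occ w X = 0.
Proof.
move=> ltXw; apply/eqP; rewrite -leqn0 leqNgt -has_count; apply/hasPn => i _.
apply/negP => /eqP/(congr1 size); rewrite size_take_min size_drop => e.
have := geq_minr (size w) (size X - i); rewrite e => /leq_trans/(_ (leq_subr i _)).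
by rewrite leqNgt ltXw.
Qed.

Lemma count_occurs_at_cat Y Z :
  count (occurs_at w (Y ++ Z)) (iota 0 (size Y)) = occ w (Y ++ take (size w).-1 Z).
Proof.
rewrite occ_cat (@occ_small (take _ _)) ?addn0; last first.
  by rewrite size_take_min (leq_ltn_trans (geq_minl _ _)) // ltn_predL.
apply: eq_in_count => i; rewrite mem_iota add0n => /andP[_ ltiY].
rewrite /occurs_at !drop_cat ltiY; congr (_ == _); apply: take_cat_take.
move: ltiY; rewrite -subn_gt0 size_drop => /prednK <-.
by rewrite addSnnS prednK ?leq_addl.
Qed.

Lemma occ_cat_window Y Z : occ w (Y ++ Z) = occ w (Y ++ take (size w).-1 Z) + occ w Z.
Proof. by rewrite occ_cat count_occurs_at_cat. Qed.

Lemma first_occ_cat Y Z :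
  (first_occ w (Y ++ Z) == size Y) =
  (take (size w) Z == w) && (occ w (Y ++ take (size w).-1 Z) == 0).
Proof.
rewrite /first_occ size_cat -addnS iotaD find_cat size_iota add0n.
have occY : (occ w (Y ++ take (size w).-1 Z) == 0) =
            ~~ has (occurs_at w (Y ++ Z)) (iota 0 (size Y)).
  by rewrite has_count count_occurs_at_cat lt0n negbK.
rewrite occY; case: ifP => [hasY | _] /=.
  by rewrite andbF ltn_eqF // -{2}(size_iota 0 (size Y)) -has_find.
rewrite andbT /occurs_at drop_size_cat //; case: ifP => _; first by rewrite addn0 eqxx.
by apply/negbTE; rewrite -[X in _ == X]addn0 eqn_add2l.
Qed.

Lemma occurs_at_first_occ X : first_occ w X <= size X -> occurs_at w X (first_occ w X).
Proof.
move=> le_X; have hasX : has (occurs_at w X) (iota 0 (size X).+1).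
  by rewrite has_find size_iota ltnS.
by have := nth_find 0 hasX; rewrite nth_iota ?add0n // ltnS.
Qed.

Lemma first_occ_lt X : 0 < occ w X -> first_occ w X < size X.
Proof.
have := @occurs_at_first_occ X; rewrite /occ /first_occ -has_count => occ_first.
rewrite has_find size_iota ltnS leq_eqVlt => /orP[/eqP eX | //].
move: occ_first; rewrite eX leqnn /occurs_at drop_size => /(_ isT) /eqP w_nil.
by move: w_gt0; rewrite -w_nil.
Qed.

End Occurrences.

Lemma Zcoef_small_prefix b (w x y : seq 'I_b) j l : l < size x -> Zcoef w x j y l = 0.
Proof.
move=> lt_l; apply: eq_card0 => X; rewrite !inE; apply/negP => /and3P[/size_prefix].
by rewrite size_tuple leqNgt lt_l.
Qed.

Lemma Zcoef_small_occ b (w x y : seq 'I_b) j l : 0 < j -> l < size w -> Zcoef w x j y l = 0.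
Proof.
move=> j_gt0 lt_l; apply: eq_card0 => X.
by rewrite !inE occ_small ?size_tuple // eq_sym eqn0Ngt j_gt0 !andbF.
Qed.

Lemma conv_eq0 (f g : nat -> nat) q m :
  (forall j, j < q -> f j = 0) -> (forall j, j < q -> g j = 0) -> m < q + q ->
  conv f g m = 0.
Proof.
move=> f0 g0 lt_m; rewrite /conv big1 // => i _.
case: (ltnP i q) => [/f0-> // | le_qi]; rewrite g0 ?muln0 //.
by have := ltn_ord i; lia.
Qed.

Lemma conv_shift (f g : nat -> nat) q n : (forall j, j < q -> f j = 0) ->
  conv f g (q + n) = \sum_(i < n.+1) f (q + i) * g (n - i).
Proof.
move=> f0; rewrite /conv -addnS big_split_ord /= big1 => [|i _]; last by rewrite f0.
by rewrite add0n; apply: eq_bigr => i _; rewrite subnDl.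
Qed.

Section FirstOccurrence.

Variables (b : nat) (d1 : 'I_b) (v : seq 'I_b).
Local Notation w := (d1 :: v).
Local Notation u := (take (size v) (d1 :: v)).

Lemma take_cons_eq Z : (take (size w) (d1 :: Z) == w) = prefix v Z.
Proof. by rewrite /= eqseq_cons eqxx prefixE. Qed.

Lemma take_cons_prefix Z : prefix v Z -> take (size v) (d1 :: Z) = u.
Proof. by case/prefixP => Z' ->; rewrite -cat_cons takel_cat. Qed.

Lemma first_occ_split s k Y Z : 0 < k -> size s = size v ->
  [&& prefix s (Y ++ d1 :: Z), occ w (Y ++ d1 :: Z) == k
    & first_occ w (Y ++ d1 :: Z) == size Y] =
  [&& prefix s (Y ++ u), occ w (Y ++ u) == 0, prefix v Z & occ w Z == k.-1].
Proof.
move=> k_gt0 sz_s.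
rewrite first_occ_cat // occ_cat_window // occ_cons take_cons_eq /=.
case vZ: (prefix v Z); rewrite ?andbF //= take_cons_prefix //.
rewrite !prefixE sz_s (take_cat_take _ _ (m := size v)) ?leq_addl // take_cons_prefix //.
case: (_ == s) => //=; case: (occ w (Y ++ u)) => [|n] /=; last by rewrite andbF.
by case: k k_gt0 => // k _; rewrite andbT add1n eqSS.
Qed.

Lemma card_first_occ_at s k n i c : 0 < k -> size s = size v -> n = i + c.+1 ->
  #|[set X : n.-tuple 'I_b |
     [&& prefix s X, suffix [::] X & occ w X == k] && (first_occ w X == i)]| =
  Zcoef w s 0 u (i + size v) * Zcoef w v k.-1 [::] c.
Proof.
move=> k_gt0 sz_s ->.
rewrite (@card_tuple_cat_cons _ d1 i c
           (fun X => [&& prefix s X, suffix [::] X & occ w X == k] && (first_occ w X == i))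
           (fun Y => prefix s (Y ++ u) && (occ w (Y ++ u) == 0))
           (fun Z => prefix v Z && (occ w Z == k.-1))); first last.
- move=> X sX /andP[_ /eqP fst_i]; have := @occurs_at_first_occ _ w X.
  rewrite fst_i sX leq_addr /occurs_at (drop_nth d1) ?sX ?addnS ?ltnS ?leq_addr //.
  by move=> /(_ isT); rewrite /= eqseq_cons => /andP[/eqP].
- by move=> Y Z sY _; rewrite suffix0s -andbA -sY first_occ_split // !andbA.
have sz_u : size u = size v by rewrite size_takel.
rewrite /Zcoef -[i + size v](congr1 (addn i) sz_u).
rewrite (card_tuple_cat_suffix _ _ (fun X => prefix s X && (occ w X == 0))).
by congr (_ * _); apply: eq_card => X; rewrite !inE ?suffix0s // andbCA.
Qed.

Lemma Zcoef_first_occ_split s k n : 0 < k -> size s = size v ->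
  Zcoef w s k [::] n.+1 = conv (Zcoef w s 0 u) (Zcoef w v k.-1 [::]) (size v + n).
Proof.
move=> k_gt0 sz_s.
rewrite conv_shift => [|j]; last by rewrite -sz_s; apply: Zcoef_small_prefix.
rewrite /Zcoef (card_set_partition
  (f := fun X : n.+1.-tuple _ => first_occ w X) (N := n.+1)); last first.
  move=> X /and3P[_ _ /eqP occ_k].
  by have := @first_occ_lt _ w isT X; rewrite size_tuple occ_k; apply.
apply: eq_bigr => i _; rewrite (card_first_occ_at (c := n - i)) //; last first.
  by have := ltn_ord i; lia.
by rewrite addnC.
Qed.

End FirstOccurrence.

Unset Implicit Arguments.

Theorem lemma3 (b : nat) (hb : 2 <= b) (w : seq 'I_b) (hp : 1 <= size w)
  (k : nat) (hk : 1 <= k) (s : seq 'I_b) (hs : size s = (size w).-1) :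
  let p := size w in
  let u := take p.-1 w in
  let v := drop 1 w in
  (forall n : nat,
     Zcoef w s k [::] n =
     shift_coef p (conv (Zcoef w s 0 u) (Zcoef w v k.-1 [::])) n) /\
  (forall m : nat, m.+2 < p ->
     conv (Zcoef w s 0 u) (Zcoef w v k.-1 [::]) m = 0).
Proof.
case: w hp hs => [|d1 v] // _ /= sz_s; rewrite drop0.
have conv0 m : m < size v + size v -> conv (Zcoef (d1 :: v) s 0 (take (size v) (d1 :: v)))
                                          (Zcoef (d1 :: v) v k.-1 [::]) m = 0.
  by apply: conv_eq0 => j lt_j; apply: Zcoef_small_prefix; rewrite ?sz_s.
split => [[|n] | m lt_m]; rewrite /shift_coef.
- by rewrite Zcoef_small_occ //; case: ifP => // le2; rewrite conv0 //; lia.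
- by rewrite Zcoef_first_occ_split // addSn addnS subn2 /= addnC.
- by rewrite conv0 //; lia.
Qed.
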